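(* Let $A\in\mathcal O(X)$. If $v\in\mathcal A(X;\mathbb R^m)$ satisfies $v(x)=0$ for all $x\in\mathrm{supp}(\mu)\cap A$, then $\nabla_\mu v(x)=0$ for $\mu$-a.a. $x\in A$.
   Context: Let $(X,d)$ be a separable compact metric space, $\mu$ a positive Radon measure on $X$, $\mathcal O(X)$ the open subsets, $\mathrm{supp}(\mu)$ the smallest closed set of full measure. Let $\mathcal A(X)$ be a subalgebra of $C(X)$ with $1\in\mathcal A(X)$ having the Urysohn property: for all $K\subset V\subset X$, $K$ compact, $V$ open, there is $\varphi\in\mathcal A(X)$ with $0\le\varphi\le1$, $\varphi=0$ on $X\setminus V$, $\varphi=1$ on $K$. Let $N\ge1$ and $D:\mathcal A(X)\to L^\infty_\mu(X;\mathbb R^N)$ be linear with $D(fg)=fDg+gDf$. Let $m\ge1$, $\mathcal A(X;\mathbb R^m)=\mathcal A(X)^m$, $\mathbb M^{m\times N}$ real $m\times N$ matrices with Euclidean inner product, $\nabla u$ the matrix with rows $Du_1,\dots,Du_m$. Let $\mathcal A^m_0=\{v\in\mathcal A(X;\mathbb R^m):v=0\text{ on }\mathrm{supp}(\mu)\}$, $\mathcal H^m_0=\{w\in L^\infty_\mu(X;\mathbb M^{m\times N}):w=\nabla v\ \mu\text{-a.e. for some }v\in\mathcal A^m_0\}$; for $\mu$-a.e. $x$, $N^m_\mu(x)=\{w(x):w\in\mathcal H^m_0\}$, $T^m_\mu(x)$ its orthogonal complement, $P^m_\mu(x)$ the orthogonal projection onto $T^m_\mu(x)$, $\nabla_\mu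 u(x)=P^m_\mu(x)(\nabla u(x))$. *)

From HB Require Import structures.
From mathcomp Require Import all_boot all_order all_algebra.
From mathcomp Require Import all_classical all_reals all_analysis.
Set Implicit Arguments. Unset Strict Implicit. Unset Printing Implicit Defensive.
Import Order.TTheory GRing.Theory Num.Theory numFieldNormedType.Exports.
Local Open Scope classical_set_scope.
Local Open Scope ring_scope.

Definition borel (X : ptopologicalType) : measurableType (sigma_display (@open X)) :=
  g_sigma_algebraType (@open X).

Definition separable_space (X : ptopologicalType) :=
  exists S : set X, countable S /\ closure S = setT.

Section Defs.
Variables (R : realType) (X : ptopologicalType).
Variable (mu : {measure set (borel X) -> \bar R}).

(* supp(mu) = smallest closed set of full measure, i.e. the intersection of
   all closed sets F whose complement is mu-null *)
Definition supp : set X :=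
  \bigcap_(F in [set F : set X | closed F /\ mu (~` F) = 0%E]) F.

Definition urysohn_subalgebra (Aalg : set (X -> R)) : Prop :=
  [/\ (forall f, Aalg f -> continuous f),
      Aalg (cst 1),
      (forall f g, Aalg f -> Aalg g -> Aalg (f \+ g)),
      (forall f g, Aalg f -> Aalg g -> Aalg (f \* g)) &
      (forall (c : R) f, Aalg f -> Aalg (fun x => c * f x))] /\
      (forall (K V : set X), compact K -> open V -> K `<=` V ->
         exists phi, [/\ Aalg phi, (forall x, 0 <= phi x <= 1),
                        (forall x, ~ V x -> phi x = 0) &
                        (forall x, K x -> phi x = 1)]).

(* D : A(X) -> L^infty_mu(X; R^N), linear, with the Leibniz rule.
   D f is given by a representative X -> 'rV_N; equalities in L^infty are
   mu-a.e. equalities. *)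
Definition derivation (N : nat) (Aalg : set (X -> R))
    (D : (X -> R) -> X -> 'rV[R]_N) : Prop :=
  [/\ (forall f, Aalg f -> forall i,
          measurable_fun [set: borel X] (fun x => D f x ord0 i)),
      (forall f, Aalg f -> forall i, exists M : R,
          {ae mu, forall x : borel X, `|D f x ord0 i| <= M}),
      (forall f g (a b : R), Aalg f -> Aalg g ->
          {ae mu, forall x : borel X,
             D (fun y => a * f y + b * g y) x = a *: D f x + b *: D g x}) &
      (forall f g, Aalg f -> Aalg g ->
          {ae mu, forall x : borel X,
             D (f \* g) x = f x *: D g x + g x *: D f x})].

Definition grad (N m : nat) (D : (X -> R) -> X -> 'rV[R]_N)
    (v : 'I_m -> X -> R) (x : X) : 'M[R]_(m, N) :=
  \matrix_(i < m, j < N) D (v i) x ord0 j.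

Definition A0 (m : nat) (Aalg : set (X -> R)) : set ('I_m -> X -> R) :=
  [set v | (forall i, Aalg (v i)) /\ (forall x, supp x -> forall i, v i x = 0)].

End Defs.

Definition frob (R : ringType) (m N : nat) (a b : 'M[R]_(m, N)) : R :=
  \sum_(i < m) \sum_(j < N) a i j * b i j.

Definition subspace (R : ringType) (m N : nat) (S : set 'M[R]_(m, N)) :=
  S 0 /\ forall (c : R) u w, S u -> S w -> S (c *: u + w).

Definition orthc (R : ringType) (m N : nat) (S : set 'M[R]_(m, N)) :=
  [set w : 'M[R]_(m, N) | forall s, S s -> frob w s = 0].

Definition orth_proj (R : ringType) (m N : nat) (T : set 'M[R]_(m, N))
    (w : 'M[R]_(m, N)) : 'M[R]_(m, N) :=
  xget 0 [set t | T t /\ orthc T (w - t)].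

Section Normal.
Variables (R : realType) (X : ptopologicalType).
Variable (mu : {measure set (borel X) -> \bar R}).
Variables (N m : nat) (Aalg : set (X -> R)) (D : (X -> R) -> X -> 'rV[R]_N).

(* Nm is (a version of) N^m_mu : for mu-a.e. x, Nm x = {w(x) : w in H^m_0},
   understood as the mu-essential span: Nm is subspace-valued, contains
   grad v (x) for a.e. x for every v in A^m_0 (i.e. every w in H^m_0), and
   is a.e. contained in any other subspace-valued map with this property. *)
Definition is_Nmu (Nm : X -> set 'M[R]_(m, N)) : Prop :=
  [/\ (forall x, subspace (Nm x)),
      (forall v, A0 mu Aalg v ->
         {ae mu, forall x : borel X, Nm x (grad D v x)}) &
      (forall N' : X -> set 'M[R]_(m, N), (forall x, subspace (N' x)) ->
         (forall v, A0 mu Aalg v ->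
            {ae mu, forall x : borel X, N' x (grad D v x)}) ->
         {ae mu, forall x : borel X, Nm x `<=` N' x})].

Definition Tmu (Nm : X -> set 'M[R]_(m, N)) (x : X) := orthc (Nm x).
Definition Pmu (Nm : X -> set 'M[R]_(m, N)) (x : X) := orth_proj (Tmu Nm x).
Definition nabla_mu (Nm : X -> set 'M[R]_(m, N)) (v : 'I_m -> X -> R)
    (x : X) : 'M[R]_(m, N) := Pmu Nm x (grad D v x).
End Normal.

(** If [v] vanishes on [supp mu ∩ A] and [K ⊆ A] is compact, an Urysohn
    function [phi] equal to [1] on [K] and supported in [A] makes [phi v]
    vanish on all of [supp mu], so [grad (phi v)] lies in [N_mu] a.e.  By the
    Leibniz rule [grad (phi v) = phi grad v + v ⊗ D phi = grad v] on
    [K ∩ supp mu], hence [grad v ∈ N_mu] and [nabla_mu v = 0] there.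
    Exhausting the open set [A] by countably many closed (hence compact) sets,
    and using that [mu] is carried by its support, gives the claim a.e. on [A].
*)

From HB Require Import structures.
From mathcomp Require Import all_boot all_order all_algebra.
From mathcomp Require Import all_classical all_reals all_analysis.
Import Order.TTheory GRing.Theory Num.Theory numFieldNormedType.Exports.
Local Open Scope classical_set_scope.
Local Open Scope ring_scope.

Section Frobenius.
Variables (R : realDomainType) (m N : nat).
Implicit Types (a b c : 'M[R]_(m, N)) (S : set 'M[R]_(m, N)).

Lemma frobC a b : frob a b = frob b a.
Proof. by apply: eq_bigr => i _; apply: eq_bigr => j _; rewrite mulrC. Qed.

Lemma frobBl a b c : frob (a - b) c = frob a c - frob b c.
Proof.
rewrite /frob -sumrB; apply: eq_bigr => i _; rewrite -sumrB.
by apply: eq_bigr => j _; rewrite !mxE mulrBl.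
Qed.

Lemma frob0l b : frob 0 b = 0.
Proof.
by rewrite /frob big1 // => i _; rewrite big1 // => j _; rewrite mxE mul0r.
Qed.

Lemma frob_self_eq0 a : frob a a = 0 -> a = 0.
Proof.
have sq_ge0 i j : 0 <= a i j * a i j by exact: sqr_ge0.
move=> /psumr_eq0P-/(_ (fun i _ => sumr_ge0 _ (fun j _ => sq_ge0 i j))) rows0.
apply/matrixP => i j; rewrite mxE.
have /eqP := psumr_eq0P (fun j _ => sq_ge0 i j) (rows0 i isT) (i := j) isT.
by rewrite mulf_eq0 orbb => /eqP.
Qed.

Lemma orth_proj_orthc_eq0 S w : S w -> orth_proj (orthc S) w = 0.
Proof.
move=> Sw; apply: xget_unique.
  by split=> [s _|s Ts]; [rewrite frob0l | rewrite subr0 frobC; apply: Ts].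
move=> t [Tt Ot]; apply: frob_self_eq0; apply/eqP.
have := Ot t Tt; rewrite frobBl frobC (Tt w Sw) sub0r.
by move=> /eqP; rewrite oppr_eq0.
Qed.

End Frobenius.

Lemma open_closed_exhaustion {R : realType} {X : pseudoPMetricType R}
    {U : set X} : open U ->
  exists K : nat -> set X,
    [/\ forall n, closed (K n), forall n, K n `<=` U & U `<=` \bigcup_n K n].
Proof.
move=> oU; exists (fun n => closure [set x | ball x n.+1%:R^-1 `<=` U]).
split=> [n|n y|x Ux]; first exact: closed_closure.
  have n_gt0 : 0 < n.+1%:R^-1 :> R by rewrite invr_gt0 ltr0n.
  by move=> /(_ _ (nbhsx_ballx _ _ n_gt0)) [z [/= zU /ball_sym]]; apply: zU.
move: oU; rewrite openE => /(_ x Ux) /nbhs_ballP [e /= e_gt0 eU].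
exists (Num.truncn e^-1) => //; apply: subset_closure => /= y /(le_ball _) yb.
apply/eU/yb; rewrite -[leRHS]invrK lef_pV2 ?posrE ?invr_gt0 ?ltr0n //.
exact/ltW/truncnS_gt.
Qed.

(* The complement of [supp mu] is the union of the open null sets [~` F];
   each closed piece of it is compact, hence covered by finitely many of
   them. *)
Lemma ae_supp {R : realType} {X : pseudoPMetricType R}
    (mu : {measure set (borel X) -> \bar R}) :
  compact [set: X] -> {ae mu, forall x : borel X, supp mu x}.
Proof.
move=> X_compact.
set S := [set F : set X | closed F /\ mu (~` F) = 0%E].
have open_nsupp : open (~` supp mu).
  by rewrite openC; apply: closed_bigI => F [].
have [K [K_closed K_nsupp nsupp_K]] := open_closed_exhaustion open_nsupp.
apply: (@negligibleS _ _ _ mu (\bigcup_n (K n : set (borel X)))).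
  by move=> x /= nsx; apply: nsupp_K.
apply: negligible_bigcup => k.
have := subclosed_compact (K_closed k) X_compact (subsetT _).
rewrite compact_cover => /(_ (set X) S setC) [F [cF _]|x /K_nsupp|D' D'S KD'].
- by rewrite openC.
- by rewrite /supp setC_bigcap.
apply: (@negligibleS _ _ _ mu _ (K k : set (borel X)) KD').
rewrite /cover bigcup_fset big_seq.
apply: (big_ind (fun B : set (borel X) => mu.-negligible B)).
- exact: negligible_set0.
- by move=> ? ?; apply: negligibleU.
move=> F /D'S; rewrite inE => -[cF muF]; exists (~` F); split => //.
by apply: sub_gen_smallest; rewrite /= openC.
Qed.

Section LocalizedGradient.
Context {R : realType} {X : pseudoPMetricType R}.
Context {mu : {measure set (borel X) -> \bar R}} {Aalg : set (X -> R)}.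
Context {N m : nat} {D : (X -> R) -> X -> 'rV[R]_N}.
Hypothesis hA : urysohn_subalgebra Aalg.
Hypothesis hD : derivation mu Aalg D.

Lemma grad_mull {phi : X -> R} {v : 'I_m -> X -> R} :
  Aalg phi -> (forall i, Aalg (v i)) ->
  {ae mu, forall x : borel X, grad D (fun i => phi \* v i) x =
     phi x *: grad D v x + (\col_i v i x) *m D phi x}.
Proof.
case: hD => _ _ _ leibniz Aphi Av.
have := filter_forall (ae_filter_ringOfSetsType mu)
  (fun i => leibniz _ _ Aphi (Av i)).
apply: filterS => x Dx; apply/matrixP => i j.
by rewrite !mxE Dx big_ord1 !mxE.
Qed.

Lemma Nmu_grad_local {Nm : X -> set 'M[R]_(m, N)} {A K : set X}
    {v : 'I_m -> X -> R} :
  is_Nmu mu Aalg D Nm -> open A -> compact K -> K `<=` A ->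
  (forall i, Aalg (v i)) ->
  (forall x, supp mu x -> A x -> forall i, v i x = 0) ->
  {ae mu, forall x : borel X, K x -> supp mu x -> Nm x (grad D v x)}.
Proof.
move=> [_ Nm_grad _] A_open K_compact KA Av v0.
case: (hA) => -[_ _ _ Amul _] urysohn.
have [phi [Aphi _ phi0 phi1]] := urysohn K A K_compact A_open KA.
have phiv_A0 : A0 mu Aalg (fun i => phi \* v i).
  split=> [i|x sx i]; first exact: Amul.
  have [Ax|nAx] := pselect (A x); first by rewrite /= v0 ?mulr0.
  by rewrite /= phi0 ?mul0r.
apply: filterS2 (Nm_grad _ phiv_A0) (grad_mull Aphi Av) => x Nx gradx Kx sx.
have vx0 : \col_i v i x = 0.
  by apply/matrixP => i j; rewrite !mxE v0 //; apply: KA.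
by move: Nx; rewrite gradx phi1 // vx0 mul0mx addr0 scale1r.
Qed.

End LocalizedGradient.

Theorem mainTheorem8 (R : realType) (X : pseudoPMetricType R)
  (X_hausdorff : hausdorff_space X) (X_compact : compact [set: X])
  (X_separable : separable_space X)
  (mu : {measure set (borel X) -> \bar R}) (mu_fin : (mu setT < +oo)%E)
  (Aalg : set (X -> R)) (hA : urysohn_subalgebra Aalg)
  (N : nat) (N_pos : (0 < N)%N) (D : (X -> R) -> X -> 'rV[R]_N)
  (hD : derivation mu Aalg D)
  (m : nat) (m_pos : (0 < m)%N)
  (Nm : X -> set 'M[R]_(m, N)) (hNm : is_Nmu mu Aalg D Nm)
  (A : set X) (A_open : open A)
  (v : 'I_m -> X -> R) (v_in : forall i, Aalg (v i))
  (v_zero : forall x, supp mu x -> A x -> forall i, v i x = 0) :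
  {ae mu, forall x : borel X, A x -> nabla_mu D Nm v x = 0}.
Proof.
have [K [K_closed KA AK]] := open_closed_exhaustion A_open.
have K_compact n : compact (K n) :=
  subclosed_compact (K_closed n) X_compact (subsetT _).
have Nm_grad n :=
  Nmu_grad_local hA hD hNm A_open (K_compact n) (KA n) v_in v_zero.
apply: filterS2 (ae_foralln Nm_grad) (ae_supp mu X_compact) => x Nx sx Ax.
have [n _ Knx] := AK x Ax.
exact: orth_proj_orthc_eq0 (Nx n Knx sx).
Qed.
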